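(* If $n\ge3$, then $a_n(y;-1,1)=0$ and $a_n(y;1,-1)=2^{n-2}y^{n-1}(y-1)$.
   Context: An inversion sequence of length $n$ is a sequence $\rho=\rho_1\cdots\rho_n$ of integers with $1\le \rho_i\le i$ for all $i$; $I_{n,i}$ is the set of those of length $n$ with last letter $i$. Let $\mathrm{area}(\rho)=\rho_1+\cdots+\rho_n$ and $\mathrm{sper}(\rho)=n+\rho_1+\sum_{i=1}^{n-1}\max(\rho_{i+1}-\rho_i,0)$ (the area and semi-perimeter of the bargraph whose $i$-th column has $\rho_i$ cells). Define $a_n(y;p,q)=\sum_{i=1}^n y^i\sum_{\rho\in I_{n,i}}p^{\mathrm{area}(\rho)}q^{\mathrm{sper}(\rho)}$. *)

From mathcomp Require Import all_boot all_order all_algebra.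
Set Implicit Arguments. Unset Strict Implicit. Unset Printing Implicit Defensive.
Import GRing.Theory.
Local Open Scope ring_scope.

Definition word_seq (n : nat) (w : n.-tuple 'I_n.+1) : seq nat :=
  [seq nat_of_ord x | x <- w].

(* rho is an inversion sequence: 1 <= rho_i <= i for all i = 1..n
   (0-based position j holds rho_{j+1}). *)
Definition is_invseq (n : nat) (w : n.-tuple 'I_n.+1) : bool :=
  [forall j : 'I_n, (0 < tnth w j)%N && (tnth w j <= j.+1)%N].

Definition area (s : seq nat) : nat := sumn s.

(* sper(rho) = n + rho_1 + sum_{i=1}^{n-1} max(rho_{i+1} - rho_i, 0);
   truncated nat subtraction is exactly max(_, 0). *)
Definition sper (s : seq nat) : nat :=
  (size s + head 0%N s +
   \sum_(i < (size s).-1) (nth 0%N s i.+1 - nth 0%N s i))%N.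

Definition lastletter (s : seq nat) : nat := last 0%N s.

Definition a_poly (R : comRingType) (n : nat) (p q : R) : {poly R} :=
  \sum_(w : n.-tuple 'I_n.+1 | is_invseq w)
     (p ^+ area (word_seq w) * q ^+ sper (word_seq w)) *: 'X^(lastletter (word_seq w)).

(* Every inversion sequence of length n+1 is uniquely rho j with rho of length n and
   1 <= j <= n+1; appending j adds j to the area and 1 + (j - rho_n)^+ to the semi-perimeter.
   For (p, q) = (-1, 1) the sum therefore factors, and the factor contributed by the second
   letter is (-1) + (-1)^2 = 0.  For (p, q) = (1, -1), appending a letter replaces the weight
   g of the last letter by (T g)(i) = sum_j (-1)^(1 + (j - i)^+) g(j); the terms with j <= i
   do not depend on i, so T doubles the last difference g(m+1) - g(m), and induction from
   length 2, where the sum is g(2) - g(1), gives 2^(n-2) (g(n) - g(n-1)). *)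

From mathcomp Require Import all_boot all_order all_algebra.
From mathcomp Require Import zify.
Set Implicit Arguments.
Unset Strict Implicit.
Unset Printing Implicit Defensive.
Import GRing.Theory.

Fixpoint inv_seqs (n : nat) : seq (seq nat) :=
  if n is n'.+1 then [seq rcons s j | s <- inv_seqs n', j <- iota 1 n] else [:: [::]].

Lemma inv_seqsS n :
  inv_seqs n.+1 = [seq rcons s j | s <- inv_seqs n, j <- iota 1 n.+1].
Proof. by []. Qed.

Lemma mem_inv_seqs n (s : seq nat) :
  s \in inv_seqs n <->
  size s = n /\ forall i, i < n -> 0 < nth 0 s i <= i.+1.
Proof.
elim: n s => [|n IHn] s.
  by rewrite inE; split=> [/eqP -> | [/size0nil ->]].
rewrite inv_seqsS; split.
  case/allpairsP=> -[t j] [/IHn [size_t t_inv] /[!mem_iota] j_range ->] /=.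
  split=> [|i lt_in]; first by rewrite size_rcons size_t.
  by rewrite nth_rcons size_t; case: (ltngtP i n) => [/t_inv | | ->] //; lia.
case=> + s_inv; case/lastP: s s_inv => [//|t j] s_inv.
rewrite size_rcons => -[size_t].
apply/allpairsP; exists (t, j); split=> //.
  apply/IHn; split=> // i lt_in.
  by have := s_inv i (leqW lt_in); rewrite nth_rcons size_t lt_in.
rewrite mem_iota add1n.
by have := s_inv n (ltnSn n); rewrite nth_rcons size_t ltnn eqxx.
Qed.

Lemma uniq_inv_seqs n : uniq (inv_seqs n).
Proof.
elim: n => [//|n IHn]; rewrite inv_seqsS.
apply: allpairs_uniq => //; first exact: iota_uniq.
by move=> [s j] [t k] _ _ /= /rcons_inj [-> ->].
Qed.

Lemma nth_word_seq n (w : n.-tuple 'I_n.+1) (i : 'I_n) : nth 0 (word_seq w) i = tnth w i.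
Proof. by rewrite (nth_map ord0) ?size_tuple // -tnth_nth. Qed.

Lemma word_seq_inj n : injective (@word_seq n).
Proof. by move=> w1 w2 /(inj_map val_inj) /val_inj. Qed.

Lemma mem_inv_seqs_word n (w : n.-tuple 'I_n.+1) :
  (word_seq w \in inv_seqs n) = is_invseq w.
Proof.
apply/idP/forallP => [/mem_inv_seqs [_ w_inv] i | w_inv].
  by rewrite -nth_word_seq; apply: w_inv.
apply/mem_inv_seqs; split=> [|i lt_in]; first by rewrite size_map size_tuple.
by have := w_inv (Ordinal lt_in); rewrite -nth_word_seq.
Qed.

Lemma inv_seqs_word n (s : seq nat) :
  s \in inv_seqs n -> exists w : n.-tuple 'I_n.+1, word_seq w = s.
Proof.
case/mem_inv_seqs=> size_s s_inv.
have size_ords : size (map (@inord n) s) == n by rewrite size_map size_s.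
exists (Tuple size_ords); rewrite /word_seq /= -map_comp map_id_in // => x.
case/(nthP 0)=> i; rewrite size_s => lt_in <- /=.
by apply: inordK; have := s_inv i lt_in; lia.
Qed.

Lemma area_rcons (s : seq nat) j : area (rcons s j) = area s + j.
Proof. exact: sumn_rcons. Qed.

Lemma sper_rcons (s : seq nat) j :
  s != [::] -> sper (rcons s j) = sper s + 1 + (j - last 0 s).
Proof.
case: s => [//|a t] _.
have nth_at k : k <= size t -> nth 0 (rcons (a :: t) j) k = nth 0 (a :: t) k.
  by move=> le_kt; rewrite nth_rcons ltnS le_kt.
have nth_last_at : nth 0 (rcons (a :: t) j) (size t) = last 0 (a :: t).
  by rewrite nth_at // -nth_last.
have nth_j : nth 0 (rcons (a :: t) j) (size t).+1 = j by rewrite nth_rcons ltnn eqxx.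
rewrite /sper size_rcons -[(size _).+1.-1]/(size t).+1 -[(size (a :: t)).-1]/(size t).
rewrite big_ord_recr -[nat_of_ord ord_max]/(size t) nth_j nth_last_at.
rewrite (eq_bigr (fun i : 'I_(size t) => nth 0 (a :: t) i.+1 - nth 0 (a :: t) i)).
  by rewrite /=; lia.
by move=> i _; rewrite !nth_at //=; apply: ltnW.
Qed.

Local Open Scope ring_scope.

Lemma sum_invseq_tuples (V : nmodType) n (F : seq nat -> V) :
  \sum_(w : n.-tuple 'I_n.+1 | is_invseq w) F (word_seq w) = \sum_(s <- inv_seqs n) F s.
Proof.
rewrite -big_filter -(big_map (@word_seq n) xpredT); apply/perm_big/uniq_perm.
- by rewrite map_inj_uniq ?filter_uniq ?index_enum_uniq //; apply: word_seq_inj.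
- exact: uniq_inv_seqs.
move=> s; apply/mapP/idP => [[w] | /[dup] s_inv /inv_seqs_word [w ws]].
  by rewrite mem_filter -mem_inv_seqs_word => /andP [+ _] ->.
by exists w; rewrite // mem_filter mem_index_enum -mem_inv_seqs_word ws s_inv.
Qed.

Lemma a_poly_inv_seqs (R : comNzRingType) n (p q : R) :
  a_poly n p q = \sum_(s <- inv_seqs n) (p ^+ area s * q ^+ sper s) *: 'X^(last 0 s).
Proof. exact: sum_invseq_tuples. Qed.

Lemma big_inv_seqsS (V : nmodType) n (F : seq nat -> V) :
  \sum_(s <- inv_seqs n.+1) F s =
  \sum_(s <- inv_seqs n) \sum_(j <- iota 1 n.+1) F (rcons s j).
Proof. by rewrite inv_seqsS big_allpairs_dep. Qed.

Section SignedSums.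
Variables (R : pzRingType) (V : lmodType R).

Lemma sum_area_rcons n (p : R) (g : nat -> V) :
  \sum_(s <- inv_seqs n.+1) p ^+ area s *: g (last 0%N s) =
  \sum_(s <- inv_seqs n) p ^+ area s *: \sum_(j <- iota 1 n.+1) p ^+ j *: g j.
Proof.
rewrite big_inv_seqsS; apply: eq_bigr => s _; rewrite scaler_sumr.
by apply: eq_bigr => j _; rewrite area_rcons last_rcons exprD scalerA.
Qed.

Lemma sum_sign_area_eq0 n (v : V) : \sum_(s <- inv_seqs n.+2) (-1) ^+ area s *: v = 0.
Proof.
elim: n v => [|n IHn] v; rewrite (sum_area_rcons _ _ (fun=> v)); last exact: IHn.
have -> : \sum_(j <- iota 1 2) (-1 : R) ^+ j *: v = 0.
  by rewrite big_cons big_seq1 expr1 expr2 mulrNN mulr1 scaleN1r scale1r addNr.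
by rewrite big1 // => s _; rewrite scaler0.
Qed.

Definition sper_transfer m (g : nat -> V) i : V :=
  \sum_(j <- iota 1 m) (-1) ^+ (1 + (j - i)) *: g j.

Lemma sum_sper_rcons n (g : nat -> V) :
  \sum_(s <- inv_seqs n.+2) (-1) ^+ sper s *: g (last 0%N s) =
  \sum_(s <- inv_seqs n.+1) (-1) ^+ sper s *: sper_transfer n.+2 g (last 0%N s).
Proof.
rewrite big_inv_seqsS big_seq [RHS]big_seq.
apply: eq_bigr => s /mem_inv_seqs [size_s _]; rewrite scaler_sumr.
have s_neq0 : s != [::] by rewrite -size_eq0 size_s.
by apply: eq_bigr => j _; rewrite sper_rcons // last_rcons scalerA -exprD addnA.
Qed.

Lemma sper_transfer_diff m (g : nat -> V) :
  sper_transfer m.+2 g m.+1 - sper_transfer m.+2 g m = 2%:R *: (g m.+2 - g m.+1).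
Proof.
rewrite /sper_transfer -sumrB -addn2 iotaD big_cat /= big1_seq => [|j]; last first.
  rewrite mem_iota => /andP [_ lt_jm].
  have [-> ->] : (j - m.+1 = 0 /\ j - m = 0)%N by lia.
  exact: subrr.
rewrite add0r add1n addn2 big_cons big_seq1 subnn subSnn subSS subSnn.
rewrite (subSn (leqnSn m)) subSnn.
rewrite !add1n !exprS !expr0 !mulr1 !mulN1r !opprK !scaleN1r !scale1r opprK.
by rewrite scaler_nat mulr2n addrACA [- _ + _]addrC.
Qed.

Lemma sum_sign_sper_last n (g : nat -> V) :
  \sum_(s <- inv_seqs n.+2) (-1) ^+ sper s *: g (last 0%N s) =
  (2 ^ n)%:R *: (g n.+2 - g n.+1).
Proof.
elim: n g => [|n IHn] g; rewrite sum_sper_rcons; last first.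
  by rewrite IHn sper_transfer_diff scalerA -natrM expnS mulnC.
have -> : inv_seqs 1 = [:: [:: 1%N]] by [].
rewrite big_seq1.
have -> : sper [:: 1%N] = 2%N by rewrite /sper big_ord0.
rewrite /sper_transfer big_cons big_seq1 /= subnn subSnn !add1n !exprS !expr0.
by rewrite !mulr1 !mulN1r !opprK scaleN1r !scale1r addrC.
Qed.

End SignedSums.

Theorem proposition2p5 (n : nat) : (3 <= n)%N ->
  a_poly n (-1 : int) 1 = 0 /\
  a_poly n (1 : int) (-1) = (2 ^ (n - 2))%:R *: ('X^(n.-1) * ('X - 1)).
Proof.
case: n => [|[|[|n]]] // _; rewrite !a_poly_inv_seqs; split.
  under eq_bigr do rewrite expr1n mulr1.
  by rewrite sum_area_rcons sum_sign_area_eq0.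
under eq_bigr do rewrite expr1n mul1r.
rewrite (sum_sign_sper_last n.+1 (fun j => 'X^j)) subn2 /=.
by rewrite mulrBr mulr1 -exprSr.
Qed.
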